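(* Let $(h,n)=(4,2)$, let $K=\{id,(12)(34),(13)(24),(14)(23)\}\leq S_4$ be the Klein group and $U=K\times\{id\}\leq S_4\times S_2$. Then $U$ is regular, but $U$ is neither a symmetry group nor an anonymity group with respect to $(4,2)$.
   Context: Permutations compose as $(\sigma\tau)(x)=\sigma(\tau(x))$. Let $G=S_h\times S_n$ and $\mathcal{P}=(S_n)^h$ (preference profiles), with $G$ acting by $(p^{(\varphi,\psi)})_i=\psi\,p_{\varphi^{-1}(i)}$. A subgroup $U\leq G$ is regular if for every $p\in\mathcal{P}$, $\mathrm{Stab}_U(p)=\{g\in U:p^g=p\}\subseteq S_h\times\{id\}$. A social preference function (SPF) is any $F:\mathcal{P}\to S_n$; its symmetry group is $G(F)=\{(\varphi,\psi)\in G: F(p^{(\varphi,\psi)})=\psi F(p)\ \forall p\}$ and its anonymity group is $G_1(F)=G(F)\cap(S_h\times\{id\})$. $U$ is a symmetry group (resp. anonymity group) with respect to $(h,n)$ if $U=G(F)$ (resp. $U=G_1(F)$) for some SPF $F$. *)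

From mathcomp Require Import all_boot all_fingroup.
Set Implicit Arguments. Unset Strict Implicit. Unset Printing Implicit Defensive.
Local Open Scope group_scope.

Definition Gelt (h n : nat) : finType := ({perm 'I_h} * {perm 'I_n})%type.

Definition profile (h n : nat) : finType := {ffun 'I_h -> {perm 'I_n}}.

(* Paper composition: (sigma tau)(x) = sigma(tau(x)).
   MathComp: (s * t) x = t (s x).  Hence the paper's psi o q is the
   MathComp product q * psi. *)
Definition pcomp (n : nat) (sigma tau : {perm 'I_n}) : {perm 'I_n} := tau * sigma.

Definition act (h n : nat) (g : Gelt h n) (p : profile h n) : profile h n :=
  [ffun i => pcomp g.2 (p (g.1^-1 i))].

Definition regular (h n : nat) (U : {set Gelt h n}) : Prop :=
  forall p : profile h n, forall g, g \in U -> act g p = p -> g.2 = 1.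

Definition SPF (h n : nat) := profile h n -> {perm 'I_n}.

Definition symgroup (h n : nat) (F : SPF h n) : {set Gelt h n} :=
  [set g : Gelt h n | [forall p : profile h n, F (act g p) == pcomp g.2 (F p)]].

Definition anongroup (h n : nat) (F : SPF h n) : {set Gelt h n} :=
  symgroup F :&: [set g : Gelt h n | g.2 == 1].

Definition is_symmetry_group (h n : nat) (U : {set Gelt h n}) : Prop :=
  exists F : SPF h n, U = symgroup F.

Definition is_anonymity_group (h n : nat) (U : {set Gelt h n}) : Prop :=
  exists F : SPF h n, U = anongroup F.

(* Klein four group in S_4, with points 1,2,3,4 encoded as 0,1,2,3. *)
Definition i4 (k : nat) : 'I_4 := inord k.
Definition klein4 : {set {perm 'I_4}} :=
  [set 1; tperm (i4 0) (i4 1) * tperm (i4 2) (i4 3);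
          tperm (i4 0) (i4 2) * tperm (i4 1) (i4 3);
          tperm (i4 0) (i4 3) * tperm (i4 1) (i4 2)].

Definition U_klein : {set Gelt 4 2} := setX klein4 [set 1 : {perm 'I_2}].

From Pilot Require Import Defs.
From mathcomp Require Import all_boot all_fingroup.

(** Let F be invariant under K, and identify a profile with the set of
    voters holding the reversed ranking.  Take a pairing {x,y},{u,v} of the
    voters, t = (x y) and k = (x y)(u v) in K.  If p x = p y then t fixes p,
    and if p u = p v then t acts on p as k does.  Otherwise p and p^t lie
    among the four profiles splitting both couples; these form two K-orbits,
    the profiles constant on the couples of each of the two other pairings,
    and t exchanges them.  So t preserves F as soon as F agrees on the other
    two pairings.  F takes three values on the three pairings but S_2 has
    only two elements, so some transposition lies in G_1(F) outside K. *)

Set Implicit Arguments.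
Unset Strict Implicit.
Unset Printing Implicit Defensive.

Local Open Scope group_scope.

Section TwoElementType.

Variables (T : finType) (card_T : #|T| = 2).

Lemma card2_neq_eq (a b c : T) : a != c -> b != c -> a = b.
Proof.
move=> ac bc; apply/eqP; apply: contraT => ab.
have := max_card (mem [:: a; b; c]).
by rewrite card_T (card_uniqP _) //= !inE negb_or ab ac bc.
Qed.

Lemma card2_pigeonhole (a b c : T) : [\/ a = b, a = c | b = c].
Proof.
have [->|ac] := eqVneq a c; first by constructor 2.
have [->|bc] := eqVneq b c; first by constructor 3.
by constructor 1; apply: card2_neq_eq ac bc.
Qed.

End TwoElementType.

Lemma card_perm2 : #|{perm 'I_2}| = 2.
Proof. by rewrite card_Sn. Qed.

Lemma uniq4_cases (T : finType) (a b c d i : T) :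
  #|T| = 4 -> uniq [:: a; b; c; d] -> [\/ i = a, i = b, i = c | i = d].
Proof.
move=> card_T uniq_abcd; have : i \in [:: a; b; c; d].
  apply/negPn/negP => iN; have := max_card (mem [:: i; a; b; c; d]).
  by rewrite card_T (card_uniqP _) //= iN.
by rewrite !inE => /or4P[]/eqP; constructor.
Qed.

Lemma uniq4E (T : eqType) (a b c d : T) :
  uniq [:: a; b; c; d] = [&& a != b, a != c, a != d, b != c, b != d & c != d].
Proof. by rewrite /= !inE !negb_or !andbT -!andbA. Qed.

Lemma double_tpermVE (T : finType) (a b c d : T) :
  uniq [:: a; b; c; d] ->
  let k := (tperm a b * tperm c d)^-1 in [/\ k a = b, k b = a, k c = d & k d = c].
Proof.
rewrite uniq4E => /and5P[ab ac ad bc /andP[bd cd]] /=.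
rewrite invMg !permM !tpermV; split.
- by rewrite (@tpermD _ c d a) ?tpermL // eq_sym.
- by rewrite (@tpermD _ c d b) ?tpermR // eq_sym.
- by rewrite tpermL tpermD.
- by rewrite tpermR tpermD.
Qed.

Section VoterPermutations.

Variables h n : nat.
Implicit Types (s : {perm 'I_h}) (p : profile h n) (F : SPF h n).

Lemma act_voterE s p i : Defs.act (s, 1) p i = p (s^-1 i).
Proof. by rewrite ffunE /Defs.pcomp /= mulg1. Qed.

Lemma act_tperm_id p x y : p x = p y -> Defs.act (tperm x y, 1) p = p.
Proof.
by move=> pxy; apply/ffunP => i; rewrite act_voterE tpermV; case: tpermP => [->|->|].
Qed.

Definition anonymous_for F s := forall p, F (Defs.act (s, 1) p) = F p.

Lemma symgroup_voterP F s : reflect (anonymous_for F s) ((s, 1) \in symgroup F).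
Proof.
rewrite inE; apply: (iffP forallP) => F_s p; last by rewrite F_s /Defs.pcomp /= mulg1.
by have /eqP := F_s p; rewrite /Defs.pcomp /= mulg1.
Qed.

Lemma anongroup_voterP F s : reflect (anonymous_for F s) ((s, 1) \in anongroup F).
Proof. by rewrite inE [_ \in [set _ | _]]inE eqxx andbT; apply: symgroup_voterP. Qed.

Lemma regular_setX1 (A : {set {perm 'I_h}}) : regular (setX A [set 1 : {perm 'I_n}]).
Proof. by move=> p [s t]; rewrite in_setX => /andP[_ /set1P ->]. Qed.

End VoterPermutations.

Definition flip2 : {perm 'I_2} := tperm ord0 ord_max.

Lemma flip2_neq1 : flip2 != 1.
Proof. by apply/eqP => /permP/(_ ord0); rewrite perm1 tpermL => /(congr1 val). Qed.

Definition pair_profile h (a b : 'I_h) : profile h 2 :=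
  [ffun i => if (i == a) || (i == b) then flip2 else 1].

Lemma pair_profile_block h (a b c d : 'I_h) :
  uniq [:: a; b; c; d] ->
  let r := pair_profile a c in [/\ r a = r c, r b = r d & r a != r b].
Proof.
rewrite uniq4E => /and5P[ab _ ad bc /andP[_ cd]] /=.
rewrite !ffunE !eqxx orbT (eq_sym b a) (eq_sym d a) (eq_sym d c).
by rewrite (negbTE ab) (negbTE bc) (negbTE ad) (negbTE cd) flip2_neq1.
Qed.

Section KleinInvariantSPF.

Variable F : SPF 4 2.

Section BlockClass.

Variables a b c d : 'I_4.
Hypothesis uniq_abcd : uniq [:: a; b; c; d].
Hypothesis F_swap : anonymous_for F (tperm a b * tperm c d).

Lemma F_block_class_const (q r : profile 4 2) :
    q a = q c -> q b = q d -> q a != q b ->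
    r a = r c -> r b = r d -> r a != r b ->
  F q = F r.
Proof.
have cases i := uniq4_cases i (card_ord 4) uniq_abcd.
have eq2 := card2_neq_eq card_perm2.
move=> qac qbd qab rac rbd rab.
have [qra|qra] := eqVneq (q a) (r a).
  have qrb : q b = r b by apply: (eq2 _ _ (q a)); rewrite eq_sym // qra.
  by congr F; apply/ffunP => i; case: (cases i) => ->; congruence.
have rqa : r a = q b by apply: (eq2 _ _ (q a)); rewrite // eq_sym.
have rqb : r b = q a by apply: (eq2 _ _ (q b)); rewrite // -rqa eq_sym.
have [ka kb kc kd] := double_tpermVE uniq_abcd.
rewrite -(F_swap q); congr F; apply/ffunP => i; rewrite act_voterE.
by case: (cases i) => ->; rewrite ?ka ?kb ?kc ?kd; congruence.
Qed.

End BlockClass.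

Section Pairing.

Variables x y u v : 'I_4.
Hypothesis uniq_xyuv : uniq [:: x; y; u; v].
Hypothesis F_pairing : anonymous_for F (tperm x y * tperm u v).

Lemma F_split_couples (q : profile 4 2) :
    q x != q y -> q u != q v ->
  F q = F (pair_profile x u) \/ F q = F (pair_profile x v).
Proof.
have eq2 := card2_neq_eq card_perm2.
have uniq_xyvu : uniq [:: x; y; v; u].
  move: uniq_xyuv; rewrite !uniq4E => /and5P[xy xu xv yu /andP[yv uv]].
  by rewrite xy xu xv yu yv eq_sym uv.
move=> qxy quv; have [qux|qux] := eqVneq (q u) (q x).
- have qvy : q v = q y by apply: (eq2 _ _ (q x)); rewrite eq_sym // -qux.
  have [rxu ryv rxy] := pair_profile_block uniq_xyuv.
  by left; apply: (F_block_class_const uniq_xyuv F_pairing).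
have quy : q u = q y by apply: (eq2 _ _ (q x)); rewrite // eq_sym.
have qvx : q v = q x by apply: (eq2 _ _ (q u)); rewrite // eq_sym.
have [rxv ryu rxy] := pair_profile_block uniq_xyvu.
by right; apply: (F_block_class_const uniq_xyvu); rewrite // [tperm v u]tpermC.
Qed.

Lemma tperm_anonymous :
  F (pair_profile x u) = F (pair_profile x v) -> anonymous_for F (tperm x y).
Proof.
move=> F_xu_xv p.
have [pxy|pxy] := eqVneq (p x) (p y); first by rewrite act_tperm_id.
have cases i := uniq4_cases i (card_ord 4) uniq_xyuv.
have [kx ky ku kv] := double_tpermVE uniq_xyuv.
move: uniq_xyuv; rewrite uniq4E => /and5P[_ xu xv yu /andP[yv _]].
have [tx ty tu tv] : [/\ (tperm x y)^-1 x = y, (tperm x y)^-1 y = x,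
                        (tperm x y)^-1 u = u & (tperm x y)^-1 v = v].
  by rewrite tpermV tpermL tpermR !tpermD.
have [puv|puv] := eqVneq (p u) (p v).
  rewrite -[RHS]F_pairing; congr F; apply/ffunP => i; rewrite !act_voterE.
  by case: (cases i) => ->; rewrite ?kx ?ky ?ku ?kv ?tx ?ty ?tu ?tv.
have tpxy : Defs.act (tperm x y, 1) p x != Defs.act (tperm x y, 1) p y.
  by rewrite !act_voterE tx ty eq_sym.
have tpuv : Defs.act (tperm x y, 1) p u != Defs.act (tperm x y, 1) p v.
  by rewrite !act_voterE tu tv.
by case: (F_split_couples tpxy tpuv) (F_split_couples pxy puv) => -> [] ->.
Qed.

End Pairing.

End KleinInvariantSPF.

Lemma eq_i4 a b : a < 4 -> b < 4 -> (i4 a == i4 b) = (a == b).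
Proof. by move=> a4 b4; rewrite -val_eqE /= !inordK. Qed.

Lemma odd_perm_klein4 k : k \in klein4 -> odd_perm k = false.
Proof.
by rewrite !inE -!orbA => /or4P[] /eqP ->; rewrite ?odd_perm1 // odd_permM !odd_tperm !eq_i4.
Qed.

Lemma tperm_notin_klein4 (a b : 'I_4) : a != b -> tperm a b \notin klein4.
Proof. by move=> ab; apply/negP => /odd_perm_klein4; rewrite odd_tperm ab. Qed.

Lemma klein4_anonymous_tperm (F : SPF 4 2) :
    {in klein4, forall k, anonymous_for F k} ->
  exists2 t, t \notin klein4 & anonymous_for F t.
Proof.
move=> F_K.
have tperm_witness y u v :
    tperm (i4 0) (i4 y) * tperm (i4 u) (i4 v) \in klein4 ->
    uniq [:: i4 0; i4 y; i4 u; i4 v] ->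
    F (pair_profile (i4 0) (i4 u)) = F (pair_profile (i4 0) (i4 v)) ->
  exists2 t, t \notin klein4 & anonymous_for F t.
  move=> kK uniq_0yuv E; exists (tperm (i4 0) (i4 y)).
    by apply: tperm_notin_klein4; move: uniq_0yuv; rewrite uniq4E => /andP[].
  exact: tperm_anonymous uniq_0yuv (F_K _ kK) E.
case: (card2_pigeonhole card_perm2 (F (pair_profile (i4 0) (i4 1)))
         (F (pair_profile (i4 0) (i4 2))) (F (pair_profile (i4 0) (i4 3)))) => E.
- by apply: (tperm_witness 3%N 1%N 2%N _ _ E); rewrite ?uniq4E ?eq_i4 // !inE eqxx !orbT.
- by apply: (tperm_witness 2%N 1%N 3%N _ _ E); rewrite ?uniq4E ?eq_i4 // !inE eqxx !orbT.
- by apply: (tperm_witness 1%N 2%N 3%N _ _ E); rewrite ?uniq4E ?eq_i4 // !inE eqxx !orbT.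
Qed.

Lemma anongroup_not_sub_U_klein (F : SPF 4 2) :
  U_klein \subset symgroup F -> ~~ (anongroup F \subset U_klein).
Proof.
move=> sUF; have F_K : {in klein4, forall k, anonymous_for F k}.
  by move=> k kK; apply/symgroup_voterP/(subsetP sUF); rewrite in_setX kK set11.
have [t tK F_t] := klein4_anonymous_tperm F_K.
apply/subsetPn; exists (t, 1); first exact/anongroup_voterP.
by rewrite in_setX (negbTE tK).
Qed.

Theorem mainTheorem8 :
  regular U_klein /\ ~ is_symmetry_group U_klein /\ ~ is_anonymity_group U_klein.
Proof.
split; first exact: regular_setX1.
split=> -[F U_F].
- have sUF : U_klein \subset symgroup F by rewrite U_F.
  by case/negP: (anongroup_not_sub_U_klein sUF); rewrite U_F subsetIl.
- have sUF : U_klein \subset symgroup F by rewrite U_F subsetIl.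
  by case/negP: (anongroup_not_sub_U_klein sUF); rewrite U_F.
Qed.
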